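(* Let $\mathbf{k}=\mathbb{R}$ or $\mathbb{C}$, let $(C^\bullet,\partial)$ be a complex of finite-dimensional $\mathbf{k}$-vector spaces of odd length $d=2r-1$, and let $\Gamma_t$, $t\in\mathbb{R}$, be a smooth family of chirality operators on $C^\bullet$. Then \[ \frac{d}{dt}\rho_{\Gamma_t}=\frac12\operatorname{Tr}_s(\dot\Gamma_t\circ\Gamma_t)\cdot\rho_{\Gamma_t}, \] where $\rho_{\Gamma_t}$ is regarded as a smooth curve in the fixed line $\operatorname{Det}(H^\bullet(\partial))$.
   Context: $\dot\Gamma_t$ is the $t$-derivative of $\Gamma_t$; $\dot\Gamma_t\circ\Gamma_t$ maps each $C^k$ to itself, and $\operatorname{Tr}_s(\dot\Gamma_t\circ\Gamma_t):=\sum_{j=0}^d(-1)^j\operatorname{Tr}(\dot\Gamma_t\circ\Gamma_t|_{C^j})$. Determinant lines: $\operatorname{Det}(V)=\Lambda^{\dim V}V$, $\operatorname{Det}(0)=\mathbf{k}$, $L^{-1}=\operatorname{Hom}(L,\mathbf{k})$, $l^{-1}(l)=1$, $\operatorname{Det}(V^\bullet)=\bigotimes_j\operatorname{Det}(V^j)^{(-1)^j}$; $\mu_{V_1,\dots,V_r}$ is the fusion isomorphism concatenating wedges. The isomorphism $\phi_{C^\bullet}:\operatorname{Det}(C^\bullet)\to\operatorname{Det}(H^\bullet(\partial))$: choose $C^j=B^j\oplus H^j\oplus A^j$ with $B^j\oplus H^j=\operatorname{Ker}\partial\cap C^j$, $B^j=\partial(A^{j-1})=\partial(C^{j-1})$,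 $A^{-1}=A^d=0$; for nonzero $c_j\in\operatorname{Det}(C^j)$, $a_j\in\operatorname{Det}(A^j)$ ($a_{-1}=1$), $h_j\in\operatorname{Det}(H^j)\cong\operatorname{Det}(H^j(\partial))$ is unique with $c_j=\mu_{B^j,H^j,A^j}(\partial(a_{j-1})\otimes h_j\otimes a_j)$; $\phi_{C^\bullet}(c_0\otimes c_1^{-1}\otimes\cdots\otimes c_d^{(-1)^d})=(-1)^{\mathcal N}h_0\otimes\cdots\otimes h_d^{(-1)^d}$, $\mathcal N=\frac12\sum_j\dim A^j(\dim A^j+(-1)^{j+1})$. A chirality operator is an involution $\Gamma$ with $\Gamma(C^j)=C^{d-j}$; $c_\Gamma=(-1)^{\mathcal R(C^\bullet)}c_0\otimes c_1^{-1}\otimes\cdots\otimes c_{r-1}^{(-1)^{r-1}}\otimes(\Gamma c_{r-1})^{(-1)^r}\otimes\cdots\otimes(\Gamma c_0)^{-1}$ for nonzero $c_j\in\operatorname{Det}(C^j)$, $j<r$ (independent of the $c_j$), $\mathcal R(C^\bullet)=\frac12\sum_{j=0}^{r-1}\dim C^j(\dim C^j+(-1)^{r+j})$; the refined torsion is $\rho_\Gamma=\phi_{C^\bullet}(c_\Gamma)$. *)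

From HB Require Import structures.
From mathcomp Require Import all_boot all_order all_algebra.
From mathcomp Require Import all_classical all_reals.
From mathcomp Require Import topology normedtype derive.
From mathcomp Require complex.
Import complex.ComplexField.

Set Implicit Arguments.
Unset Strict Implicit.
Unset Printing Implicit Defensive.

Import Order.TTheory GRing.Theory Num.Theory.
Import numFieldNormedType.Exports.
Local Open Scope ring_scope.

(* The total space C = C^0 (+) ... (+) C^d is k^N (row vectors, linear   *)
(* maps act on the right: x |-> x *m M).  The graded piece C^j is the    *)
(* row space of E j : 'M_N.  The differential is D : 'M_N.               *)

Section Torsion.
Variable K : fieldType.
Variable N : nat.

Definition is_complex (d : nat) (E : nat -> 'M[K]_N) (D : 'M[K]_N) : Prop :=
  [/\ mxdirect (\sum_(j < d.+1) E j)%MS,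
      (\sum_(j < d.+1) E j :=: 1%:M)%MS,
      (forall j, (j < d)%N -> (E j *m D <= E j.+1)%MS),
      E d *m D = 0 &
      D *m D = 0].

Definition chirality (d : nat) (E : nat -> 'M[K]_N) (G : 'M[K]_N) : Prop :=
  G *m G = 1%:M /\ (forall j, (j <= d)%N -> (E j *m G :=: E (d - j)%N)%MS).

(* determinant of a matrix that is square (0 if the dimensions differ) *)
Definition sqdet m n (M : 'M[K]_(m, n)) : K := \det (conform_mx (0 : 'M[K]_m) M).

(* Det(U) is identified with K through the fixed basis row_base U:
   the coordinate of v_1 /\ ... /\ v_k (rows of V, lying in U)
   is the determinant of the coefficient matrix of V in that basis. *)
Definition wcoord (U : 'M[K]_N) k (V : 'M[K]_(k, N)) : K :=
  sqdet (V *m pinvmx (row_base U)).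

Definition spow (j : nat) (s : K) : K := if odd j then s^-1 else s.

Variables (E : nat -> 'M[K]_N) (D : 'M[K]_N).

Definition Zsp j : 'M[K]_N := (E j :&: kermx D)%MS.
Definition Bsp j : 'M[K]_N :=
  match j with 0 => 0 | j'.+1 => (E j' *m D)%MS end.
(* chosen complements: B^j (+) H^j = Z^j,  Z^j (+) A^j = C^j *)
Definition Hsp j : 'M[K]_N := (Zsp j :\: Bsp j)%MS.
Definition Asp j : 'M[K]_N := (E j :\: Zsp j)%MS.

(* d(a_{j-1}) for the basis a_{j-1} = row_base A^{j-1}  (a_{-1} = 1) *)
Definition dArows j : nat := match j with 0 => 0 | j'.+1 => \rank (Asp j') end.
Definition dA j : 'M[K]_(dArows j, N) :=
  match j return 'M[K]_(dArows j, N) with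
  | 0 => 0
  | j'.+1 => row_base (Asp j') *m D
  end.

(* coordinate in Det(C^j) of  mu_{B,H,A}(d(a_{j-1}) (x) h_j (x) a_j)
   where h_j = row_base H^j; Det(H^j) ~ Det(H^j(d)) is identified with K
   through the (t-independent) basis of H^j(d) given by the classes of
   the rows of row_base H^j. *)
Definition gfac j : K :=
  wcoord (E j) (col_mx (col_mx (dA j) (row_base (Hsp j))) (row_base (Asp j))).

(* phi_{C^.} in coordinates: x j = coordinate of c_j in Det(C^j);
   the unique h_j has coordinate x j / gfac j; returns the coordinate of
   (-1)^Nexp h_0 (x) h_1^{-1} (x) ... in Det(H^.(d)). *)
Definition Nexp (d : nat) : nat :=
  (\sum_(j < d.+1)
     \rank (Asp j) * (if odd j then (\rank (Asp j)).+1 else (\rank (Asp j)).-1))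
  %/ 2.
Definition phiC (d : nat) (x : nat -> K) : K :=
  (-1) ^+ Nexp d * \prod_(j < d.+1) spow j (x j / gfac j).

Definition Rexp (r : nat) : nat :=
  (\sum_(j < r) \rank (E j) * (if odd (r + j) then (\rank (E j)).-1
                                             else (\rank (E j)).+1)) %/ 2.

(* c_Gamma, with the choice c_j = row_base (E j) (coordinate 1) for j < r;
   for j >= r the j-th factor is Gamma c_{d-j} in Det(C^j).
   c_Gamma = (-1)^R * (tuple xGamma). *)
Definition xGamma (r : nat) (G : 'M[K]_N) (j : nat) : K :=
  if (j < r)%N then 1 else wcoord (E j) (row_base (E (r.*2.-1 - j)%N) *m G).

(* refined torsion rho_Gamma = phi(c_Gamma), as a coordinate in Det(H^.(d)) *)
Definition rho (r : nat) (G : 'M[K]_N) : K :=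
  (-1) ^+ Rexp r * phiC (r.*2.-1) (xGamma r G).

(* Tr_s(M) = sum_j (-1)^j Tr(M|_{C^j}) for M preserving each C^j *)
Definition restr (U : 'M[K]_N) (M : 'M[K]_N) : 'M[K]_(\rank U) :=
  row_base U *m M *m pinvmx (row_base U).
Definition strace (d : nat) (M : 'M[K]_N) : K :=
  \sum_(j < d.+1) (-1) ^+ j * \tr (restr (E j) M).

End Torsion.

Definition has_derR (R : realType) (f : R -> R) (t v : R) : Prop :=
  is_derive t 1 f v.

Definition has_derC (R : realType) (f : R -> complex.complex R) (t : R)
  (v : complex.complex R) : Prop :=
  is_derive t 1 (fun s => complex.Re (f s)) (complex.Re v) /\
  is_derive t 1 (fun s => complex.Im (f s)) (complex.Im v).

Definition smooth (R : realType) (K : Type) (hd : (R -> K) -> R -> K -> Prop)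
  (f : R -> K) : Prop :=
  exists F : nat -> R -> K, F O = f /\ forall n t, hd (F n) t (F n.+1 t).

From HB Require Import structures.
From mathcomp Require Import all_boot all_order all_algebra fingroup perm.
From mathcomp Require Import all_classical all_reals.
From mathcomp Require Import topology normedtype derive.
From mathcomp Require complex.
From mathcomp Require Import ring zify.
Import complex.ComplexField.

Set Implicit Arguments.
Unset Strict Implicit.
Unset Printing Implicit Defensive.

Import GRing.Theory Num.Theory.
Import numFieldNormedType.Exports.
Local Open Scope ring_scope.

(* Only the factors c_j, j >= r, of c_Gamma move with Gamma, so rho_Gamma is a
   constant times the product over r <= j <= d of [Gamma c_(d-j) : c_j]^((-1)^j),
   where the bracket is the determinant of Gamma : C^(d-j) -> C^j in fixed bases.
   Since Gamma^-1 = Gamma, the logarithmic derivative of this determinant is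
   tr(Gamma' o Gamma | C^j).  Differentiating Gamma^2 = 1 gives
   Gamma' o Gamma = - Gamma o Gamma', and as Gamma exchanges C^j and C^(d-j) this
   turns into tr(Gamma' o Gamma | C^(d-j)) = - tr(Gamma' o Gamma | C^j).  Since d
   is odd, the terms (-1)^j tr(Gamma' o Gamma | C^j) with j >= r therefore make up
   exactly half of the supertrace. *)

Record is_derivation (R : Type) (K : comPzRingType)
    (der : (R -> K) -> R -> K -> Prop) : Prop := IsDerivation {
  der_cst : forall c t, der (fun _ => c) t 0;
  der_add : forall f g t u v, der f t u -> der g t v ->
    der (fun s => f s + g s) t (u + v);
  der_mul : forall f g t u v, der f t u -> der g t v ->
    der (fun s => f s * g s) t (u * g t + f t * v);
  der_unique : forall f t u v, der f t u -> der f t v -> u = v }.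

Section Calculus.
Variables (R : Type) (K : comPzRingType) (der : (R -> K) -> R -> K -> Prop).
Hypothesis derP : is_derivation der.

Lemma der_eq f g t u v : der f t u -> f =1 g -> u = v -> der g t v.
Proof. by move=> derf /funext <- <-. Qed.

Lemma der_cmul c f t u : der f t u -> der (fun s => c * f s) t (c * u).
Proof.
move=> derf; apply: der_eq (der_mul derP (der_cst derP c t) derf) _ _ => //.
by rewrite mul0r add0r.
Qed.

Lemma der_sum (I : Type) (r : seq I) (P : pred I) F Fd t :
  (forall i, P i -> der (F i) t (Fd i)) ->
  der (fun s => \sum_(i <- r | P i) F i s) t (\sum_(i <- r | P i) Fd i).
Proof.
move=> derF; elim: r => [|i r IH].
  by apply: der_eq (der_cst derP 0 t) _ _ => [s|]; rewrite big_nil.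
case Pi: (P i); last by apply: der_eq IH _ _ => [s|]; rewrite big_cons Pi.
by apply: der_eq (der_add derP (derF i Pi) IH) _ _ => [s|]; rewrite big_cons Pi.
Qed.

Lemma der_prod (I : eqType) (r : seq I) F Fd t : uniq r ->
  (forall i, i \in r -> der (F i) t (Fd i)) ->
  der (fun s => \prod_(i <- r) F i s) t
      (\sum_(i <- r) Fd i * \prod_(j <- r | j != i) F j t).
Proof.
elim: r => [|i r IH] /=.
  by move=> _ _; apply: der_eq (der_cst derP 1 t) _ _ => [s|]; rewrite !big_nil.
case/andP=> i_notin_r r_uniq derF.
have derFr k : k \in r -> der (F k) t (Fd k).
  by move=> kr; apply: derF; rewrite inE kr orbT.
apply: der_eq (der_mul derP (derF i (mem_head i r)) (IH r_uniq derFr)) _ _ => [s|].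
  by rewrite big_cons.
rewrite big_cons /= [X in _ = Fd i * X + _]big_cons eqxx /=.
rewrite [\prod_(j <- r | j != i) _]big_rmcond_in => [|k kr]; last first.
  by move=> /negPn /eqP ki; rewrite -ki kr in i_notin_r.
congr (_ + _); rewrite big_distrr /=; apply: eq_big_seq => k kr.
have ik : i != k by apply: contraNneq i_notin_r => ->.
by rewrite big_cons ik mulrCA.
Qed.

Lemma der_prod_log (I : eqType) (r : seq I) F tau t : uniq r ->
  (forall i, i \in r -> der (F i) t (F i t * tau i)) ->
  der (fun s => \prod_(i <- r) F i s) t
      ((\prod_(i <- r) F i t) * \sum_(i <- r) tau i).
Proof.
move=> r_uniq derF; apply: der_eq (der_prod r_uniq derF) _ _ => //.
rewrite big_distrr /=; apply: eq_big_seq => i ir.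
by rewrite (bigD1_seq i) //= mulrAC mulrC.
Qed.

Definition mxder m n (M : R -> 'M[K]_(m, n)) t (Md : 'M[K]_(m, n)) :=
  forall i j, der (fun s => M s i j) t (Md i j).

Lemma mxder_cst m n (A : 'M[K]_(m, n)) t : mxder (fun _ => A) t 0.
Proof. by move=> i j; apply: der_eq (der_cst derP _ t) _ _; rewrite ?mxE. Qed.

Lemma mxder_mul m n p (M : R -> 'M[K]_(m, n)) (M' : R -> 'M[K]_(n, p)) Md Md' t :
  mxder M t Md -> mxder M' t Md' ->
  mxder (fun s => M s *m M' s) t (Md *m M' t + M t *m Md').
Proof.
move=> derM derM' i j.
have derMM' := der_sum (index_enum 'I_n) (P := xpredT)
  (fun k _ => der_mul derP (derM i k) (derM' k j)).
apply: der_eq derMM' _ _ => [s|]; first by rewrite mxE.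
by rewrite !mxE -big_split; apply: eq_bigr => k _; rewrite ?mxE.
Qed.

Lemma mxder_mull m n p (A : 'M[K]_(m, n)) (M : R -> 'M[K]_(n, p)) Md t :
  mxder M t Md -> mxder (fun s => A *m M s) t (A *m Md).
Proof. by move=> derM; have := mxder_mul (mxder_cst A t) derM; rewrite mul0mx add0r. Qed.

Lemma mxder_mulr m n p (A : 'M[K]_(n, p)) (M : R -> 'M[K]_(m, n)) Md t :
  mxder M t Md -> mxder (fun s => M s *m A) t (Md *m A).
Proof. by move=> derM; have := mxder_mul derM (mxder_cst A t); rewrite mulmx0 addr0. Qed.

Lemma mxder_unique m n (M : R -> 'M[K]_(m, n)) t Md Md' :
  mxder M t Md -> mxder M t Md' -> Md = Md'.
Proof.
by move=> derM derM'; apply/matrixP => i j; apply: (der_unique derP (derM i j) (derM' i j)).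
Qed.

Lemma perm_moved_other n (σ : 'S_n) i : σ != 1%g -> exists2 j, j != i & σ j != j.
Proof.
move=> σ_neq1; have [a σa] : exists a, σ a != a.
  apply/existsP; apply: contraR σ_neq1 => /existsPn fixσ.
  by apply/eqP/permP => a; rewrite perm1; apply/eqP; rewrite -[_ == _]negbK.
have [->|ai] := eqVneq i a; last by exists a; rewrite // eq_sym.
exists (σ a); first by [].
by rewrite (inj_eq perm_inj).
Qed.

Lemma der_det_id n (M : R -> 'M[K]_n) Md t :
  mxder M t Md -> M t = 1%:M -> der (fun s => \det (M s)) t (\tr Md).
Proof.
move=> derM Mt1.
have derσ (σ : 'S_n) : der (fun s => (-1) ^+ σ * \prod_i M s i (σ i)) t
    ((-1) ^+ σ * \sum_i Md i (σ i) * \prod_(j | j != i) M t j (σ j)).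
  exact/der_cmul/der_prod/(fun i _ => derM i (σ i))/index_enum_uniq.
apply: der_eq (der_sum (index_enum _) (fun σ _ => derσ σ)) _ _ => [//|].
rewrite (bigD1 1%g) //= [X in _ + X]big1 ?addr0 => [|σ σ_neq1].
  rewrite odd_perm1 mul1r /mxtrace; apply: eq_bigr => i _.
  by rewrite perm1 big1 ?mulr1 // => j _; rewrite perm1 Mt1 mxE eqxx.
rewrite big1 ?mulr0 // => i _.
have [j ji σj] := perm_moved_other i σ_neq1.
by rewrite (bigD1 j) //= Mt1 mxE eq_sym (negbTE σj) mul0r mulr0.
Qed.

End Calculus.

Lemma der_det (R : Type) (K : comUnitRingType) (der : (R -> K) -> R -> K -> Prop)
    (derP : is_derivation der) n (M : R -> 'M[K]_n) Md t :
  mxder der M t Md -> M t \in unitmx ->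
  der (fun s => \det (M s)) t (\det (M t) * \tr (invmx (M t) *m Md)).
Proof.
move=> derM Mt_unit.
have derM1 := der_det_id derP (mxder_mull derP (invmx (M t)) derM) (mulVmx Mt_unit).
apply: der_eq (der_cmul derP (\det (M t)) derM1) _ _ => // s.
by rewrite -det_mulmx mulmxA mulmxV // mul1mx.
Qed.

Section FieldCalculus.
Variables (R : Type) (K : fieldType) (der : (R -> K) -> R -> K -> Prop).
Hypothesis derP : is_derivation der.

Lemma mxder_submx m n p (M : R -> 'M[K]_(m, n)) (B : 'M[K]_(p, n)) Md t :
  (forall s, (M s <= B)%MS) -> mxder der M t Md -> (Md <= B)%MS.
Proof.
move=> MB derM.
have MBK : (fun s => M s *m (pinvmx B *m B)) = M.
  by apply: funext => s; rewrite mulmxA mulmxKpV.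
have := mxder_mulr derP (pinvmx B *m B) derM; rewrite MBK => /(mxder_unique derP derM) ->.
by rewrite mulmxA submxMl.
Qed.

Lemma sqdetV m n (e : m = n) (A : 'M[K]_(m, n)) (B : 'M[K]_(n, m)) :
  A *m B = 1%:M -> (sqdet A)^-1 = sqdet B.
Proof.
by subst n => AB; apply: mulr1_eq; rewrite /sqdet !conform_mx_id -det_mulmx AB det1.
Qed.

Lemma der_sqdet m n (e : m = n) (M : R -> 'M[K]_(m, n)) Md (X : 'M[K]_(n, m)) t :
  mxder der M t Md -> M t *m X = 1%:M ->
  der (fun s => sqdet (M s)) t (sqdet (M t) * \tr (X *m Md)).
Proof.
subst n => derM MX; rewrite /sqdet.
have [Mt_unit _] := mulmx1_unit MX.
have -> : X = invmx (M t) by rewrite -[X](mulKmx Mt_unit) MX mulmx1.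
by apply: der_eq (der_det derP derM Mt_unit) _ _ => [s|]; rewrite conform_mx_id.
Qed.

End FieldCalculus.

Section Involution.
Variables (K : fieldType) (N : nat) (U V G : 'M[K]_N).
Hypothesis GG : G *m G = 1%:M.
Hypothesis UGV : (U *m G :=: V)%MS.

Lemma eqmxM_involution : (V *m G :=: U)%MS.
Proof. by apply: eqmx_sym; have := eqmxMr G UGV; rewrite -mulmxA GG mulmx1. Qed.

Lemma mxrank_involution : \rank U = \rank V.
Proof.
have [G_unit _] := mulmx1_unit GG.
by rewrite -UGV mxrankMfree // row_free_unit.
Qed.

Lemma row_base_involutionK :
  (row_base U *m G *m pinvmx (row_base V)) *m (row_base V *m G *m pinvmx (row_base U))
  = 1%:M.
Proof.
have UG_V : (row_base U *m G <= row_base V)%MS.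
  by rewrite (eq_row_base V) -UGV submxMr ?eq_row_base.
rewrite mulmxA [_ *m (row_base V *m G)]mulmxA (mulmxKpV UG_V).
by rewrite -(mulmxA _ G G) GG mulmx1 mulmxVp ?row_base_free.
Qed.

Lemma wcoord_involutionV :
  (wcoord V (row_base U *m G))^-1 = wcoord U (row_base V *m G).
Proof. exact: (sqdetV mxrank_involution row_base_involutionK). Qed.

End Involution.

Lemma mxtrace_restr_mulC (K : fieldType) (N : nat) (U V A B : 'M[K]_N) :
  (U *m A <= V)%MS -> (V *m B <= U)%MS ->
  \tr (restr U (A *m B)) = \tr (restr V (B *m A)).
Proof.
move=> UA_V VB_U.
have /mulmxKpV KV : (row_base U *m A <= row_base V)%MS.
  by rewrite (eq_row_base V) (submx_trans _ UA_V) ?submxMr ?eq_row_base.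
have /mulmxKpV KU : (row_base V *m B <= row_base U)%MS.
  by rewrite (eq_row_base U) (submx_trans _ VB_U) ?submxMr ?eq_row_base.
(* Opaque names keep mulmxA from unfolding row_base and pinvmx. *)
rewrite /restr; move: KU KV.
move: (row_base U) (row_base V) (pinvmx (row_base U)) (pinvmx (row_base V)).
move=> bU bV pU pV KU KV.
have -> : bU *m (A *m B) *m pU = (bU *m A *m pV) *m (bV *m B *m pU).
  by rewrite !mulmxA KV.
by rewrite mxtrace_mulC !mulmxA KU.
Qed.

Section InvolutionCurve.
Variables (R : Type) (K : fieldType) (der : (R -> K) -> R -> K -> Prop).
Hypothesis derP : is_derivation der.
Variables (N : nat) (G : R -> 'M[K]_N) (Gd : 'M[K]_N) (t : R).
Hypothesis GG : forall s, G s *m G s = 1%:M.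
Hypothesis derG : mxder der G t Gd.

Lemma der_involution_anticomm : G t *m Gd = - (Gd *m G t).
Proof.
have derGG : mxder der (fun s => G s *m G s) t 0.
  by rewrite (funext GG); apply: mxder_cst.
apply/eqP; rewrite -addr_eq0 addrC; apply/eqP.
exact: (mxder_unique derP (mxder_mul derP derG derG) derGG).
Qed.

Lemma der_wcoord_involution (U V : 'M[K]_N) : (forall s, (U *m G s :=: V)%MS) ->
  der (fun s => wcoord V (row_base U *m G s)) t
      (wcoord V (row_base U *m G t) * \tr (restr V (G t *m Gd))).
Proof.
move=> UGV.
have derM := mxder_mulr derP (pinvmx (row_base V)) (mxder_mull derP (row_base U) derG).
have UV := mxrank_involution (GG t) (UGV t).
apply: der_eq (der_sqdet derP UV derM (row_base_involutionK (GG t) (UGV t))) _ _ => //.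
have /mulmxKpV VGK : (row_base V *m G t <= row_base U)%MS.
  by rewrite (eq_row_base U) -(eqmxM_involution (GG t) (UGV t)) submxMr ?eq_row_base.
congr (_ * _); rewrite /restr; move: VGK.
move: (row_base U) (row_base V) (pinvmx (row_base U)) (pinvmx (row_base V)).
by move=> bU bV pU pV VGK; rewrite !mulmxA VGK.
Qed.

Lemma mxtrace_restr_involution (U V : 'M[K]_N) : (forall s, (U *m G s :=: V)%MS) ->
  \tr (restr U (G t *m Gd)) = - \tr (restr V (G t *m Gd)).
Proof.
move=> UGV.
have UGd_V : (U *m Gd <= V)%MS.
  by apply: (mxder_submx derP _ (mxder_mull derP U derG)) => s; rewrite UGV.
have VG_U : (V *m G t <= U)%MS by rewrite (eqmxM_involution (GG t) (UGV t)).
rewrite [in LHS]der_involution_anticomm -(mxtrace_restr_mulC UGd_V VG_U).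
by rewrite /restr mulmxN mulNmx linearN.
Qed.

End InvolutionCurve.

Lemma big_nat_upper_half (K : fieldType) (r : nat) (x : nat -> K) : (2 : K) != 0 ->
  (forall j, (j < r.*2)%N -> x (r.*2.-1 - j)%N = x j) ->
  \sum_(r <= j < r.*2) x j = 2^-1 * \sum_(j < r.*2) x j.
Proof.
move=> two_neq0 x_sym; rewrite -addnn in x_sym *.
have lower_upper : \sum_(0 <= j < r) x j = \sum_(r <= j < r + r) x j.
  rewrite big_nat_rev -{3}[r]add0n big_addn addnK add0n.
  by apply: eq_big_nat => j /andP [_ jr]; rewrite -x_sym; [congr x; lia | lia].
rewrite -(big_mkord xpredT) (big_cat_nat (leq0n r)) ?leq_addr //= lower_upper.
by field.
Qed.

Lemma spowM {K : fieldType} j : {morph @spow K j : x y / x * y}.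
Proof. by move=> x y; rewrite /spow; case: odd; rewrite ?invfM. Qed.

Lemma spow1 {K : fieldType} j : spow j (1 : K) = 1.
Proof. by rewrite /spow; case: odd; rewrite ?invr1. Qed.

Lemma rho_prod (K : fieldType) (N r : nat) (E : nat -> 'M[K]_N) (D : 'M[K]_N) :
  (0 < r)%N -> exists c, forall G,
  rho E D r G = c * \prod_(r <= j < r.*2)
                      spow j (wcoord (E j) (row_base (E (r.*2.-1 - j)%N) *m G)).
Proof.
move=> r_gt0; have dS : (r.*2.-1).+1 = r.*2 by rewrite prednK ?double_gt0.
exists ((-1) ^+ Rexp E r * (-1) ^+ Nexp E D r.*2.-1 *
        \prod_(j < r.*2) spow j (gfac E D j)^-1) => G.
have lowE : \prod_(j < r.*2) spow j (xGamma E r G j) = \prod_(r <= j < r.*2)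
              spow j (wcoord (E j) (row_base (E (r.*2.-1 - j)%N) *m G)).
  have r_le : (r <= r.*2)%N by rewrite -addnn leq_addr.
  rewrite -(big_mkord xpredT (fun j => spow j (xGamma E r G j))).
  rewrite (big_cat_nat (leq0n r) r_le) //= big_nat_cond big1 ?mul1r.
    by apply: eq_big_nat => j /andP [rj _]; rewrite /xGamma ltnNge rj.
  by move=> j /andP [/andP [_ jr] _]; rewrite /xGamma jr spow1.
rewrite /rho /phiC dS (eq_bigr _ (fun (j : 'I_r.*2) _ => spowM j _ _)) big_split /=.
by rewrite lowE mulrA [X in _ * X]mulrC mulrA.
Qed.

Section Chirality.
Variables (R : Type) (K : fieldType) (der : (R -> K) -> R -> K -> Prop).
Hypothesis derP : is_derivation der.
Variables (N r : nat) (E : nat -> 'M[K]_N) (G : R -> 'M[K]_N) (Gd : 'M[K]_N) (t : R).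
Local Notation d := r.*2.-1.
Hypothesis chirG : forall s, chirality d E (G s).
Hypothesis derG : mxder der G t Gd.

Let GG s : G s *m G s = 1%:M := (chirG s).1.

Let chirE j s : (j <= d)%N -> (E j *m G s :=: E (d - j))%MS := (chirG s).2 j.

Lemma mxtrace_restr_chirality j : (j <= d)%N ->
  \tr (restr (E (d - j)) (G t *m Gd)) = - \tr (restr (E j) (G t *m Gd)).
Proof.
move=> jd; apply: (mxtrace_restr_involution derP GG derG) => s.
exact: (eqmxM_involution (GG s) (chirE s jd)).
Qed.

Lemma der_chirality_factor j : (j <= d)%N ->
  der (fun s => spow j (wcoord (E j) (row_base (E (d - j)) *m G s))) t
      (spow j (wcoord (E j) (row_base (E (d - j)) *m G t)) *
       ((-1) ^+ j * \tr (restr (E j) (G t *m Gd)))).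
Proof.
move=> jd; have EG s := chirE s jd; have GE s := eqmxM_involution (GG s) (EG s).
rewrite /spow -signr_odd; case: odd; last first.
  by rewrite expr0 mul1r; apply: (der_wcoord_involution derP GG derG GE).
apply: der_eq (der_wcoord_involution derP GG derG EG) _ _ => [s|].
  by rewrite (wcoord_involutionV (GG s) (GE s)).
by rewrite (wcoord_involutionV (GG t) (GE t)) mxtrace_restr_chirality // mulN1r mulrN.
Qed.

Hypothesis r_gt0 : (0 < r)%N.

Lemma der_rho (D : 'M[K]_N) : (2 : K) != 0 ->
  der (fun s => rho E D r (G s)) t
      (2^-1 * strace E d (G t *m Gd) * rho E D r (G t)).
Proof.
move=> two_neq0; have [c rhoE] := rho_prod E D r_gt0.
have dS : d.+1 = r.*2 by rewrite prednK ?double_gt0.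
have odd_d : odd d by have := odd_double r; rewrite -dS /= => /negbFE.
pose tau j := (-1) ^+ j * \tr (restr (E j) (G t *m Gd)).
have derF j : j \in index_iota r r.*2 ->
    der (fun s => spow j (wcoord (E j) (row_base (E (d - j)) *m G s))) t
        (spow j (wcoord (E j) (row_base (E (d - j)) *m G t)) * tau j).
  by rewrite mem_index_iota -dS ltnS => /andP [_ jd]; apply: der_chirality_factor.
apply: der_eq (der_cmul derP c (der_prod_log derP (iota_uniq _ _) derF)) _ _ => [s|].
  by rewrite rhoE.
rewrite rhoE /strace dS -(big_nat_upper_half (x := tau)) // => [|j].
  by rewrite [RHS]mulrC mulrA.
rewrite -dS ltnS => jd; rewrite /tau mxtrace_restr_chirality // -signr_odd oddB //.
rewrite odd_d -(signr_odd _ j) mulrN.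
by case: odd; rewrite /= ?expr0 ?expr1 ?mulN1r ?mul1r ?opprK.
Qed.

End Chirality.

Section RealAndComplexDerivatives.
Variable R : realType.
Local Notation C := (complex.complex R).
Local Notation Re := complex.Re.
Local Notation Im := complex.Im.

Lemma has_derR_derivation : is_derivation (@has_derR R).
Proof.
split=> [c t|f g t u v|f g t u v fu gv|f t u v fu fv].
- exact: is_derive_cst.
- exact: is_deriveD.
- apply: is_derive_eq (is_deriveM fu gv) _.
  by rewrite addrC [u * _]mulrC.
- by rewrite -(@derive_val R R^o R^o t 1 f u fu) (@derive_val R R^o R^o t 1 f v fv).
Qed.

Lemma Re_add (x y : C) : Re (x + y) = Re x + Re y. Proof. by case: x; case: y. Qed.
Lemma Im_add (x y : C) : Im (x + y) = Im x + Im y. Proof. by case: x; case: y. Qed.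
Lemma Re_mul (x y : C) : Re (x * y) = Re x * Re y - Im x * Im y.
Proof. by case: x; case: y. Qed.
Lemma Im_mul (x y : C) : Im (x * y) = Re x * Im y + Im x * Re y.
Proof. by case: x; case: y. Qed.

Lemma has_derC_derivation : is_derivation (@has_derC R).
Proof.
have derR := has_derR_derivation.
split=> [c t|f g t u v [fRe fIm] [gRe gIm]|f g t u v [fRe fIm] [gRe gIm]|f t u v].
- by split; apply: is_derive_cst.
- split; [apply: der_eq (der_add derR fRe gRe) _ _ => [s|] |
          apply: der_eq (der_add derR fIm gIm) _ _ => [s|]];
  by rewrite ?Re_add ?Im_add.
- have derRe := der_add derR (der_mul derR fRe gRe)
                          (der_cmul derR (-1) (der_mul derR fIm gIm)).
  have derIm := der_add derR (der_mul derR fRe gIm) (der_mul derR fIm gRe).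
  split; [apply: der_eq derRe _ _ => [s|] | apply: der_eq derIm _ _ => [s|]];
  by rewrite ?Re_add ?Im_add ?Re_mul ?Im_mul; ring.
- case: u => a b; case: v => a' b' [/= fRe fIm] [/= fRe' fIm'].
  by rewrite (der_unique derR fRe fRe') (der_unique derR fIm fIm').
Qed.

End RealAndComplexDerivatives.

Theorem proposition4p5 (R : realType) :
  (forall (N r : nat) (E : nat -> 'M[R]_N) (D : 'M[R]_N) (G Gdot : R -> 'M[R]_N),
     (0 < r)%N ->
     is_complex (r.*2.-1) E D ->
     (forall t, chirality (r.*2.-1) E (G t)) ->
     (forall i j, smooth (@has_derR R) (fun t => G t i j)) ->
     (forall t i j, has_derR (fun s => G s i j) t (Gdot t i j)) ->
     forall t, has_derR (fun s => rho E D r (G s)) t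
       (2^-1 * strace E (r.*2.-1) (G t *m Gdot t) * rho E D r (G t)))
  /\
  (forall (N r : nat) (E : nat -> 'M[complex.complex R]_N) (D : 'M[complex.complex R]_N)
          (G Gdot : R -> 'M[complex.complex R]_N),
     (0 < r)%N ->
     is_complex (r.*2.-1) E D ->
     (forall t, chirality (r.*2.-1) E (G t)) ->
     (forall i j, smooth (@has_derC R) (fun t => G t i j)) ->
     (forall t i j, has_derC (fun s => G s i j) t (Gdot t i j)) ->
     forall t, has_derC (fun s => rho E D r (G s)) t
       (2^-1 * strace E (r.*2.-1) (G t *m Gdot t) * rho E D r (G t))).
Proof.
split=> N r E D G Gdot r_gt0 _ chirG _ derG t.
  by apply: (der_rho (has_derR_derivation R) chirG (derG t) r_gt0); rewrite pnatr_eq0.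
by apply: (der_rho (has_derC_derivation R) chirG (derG t) r_gt0); rewrite pnatr_eq0.
Qed.
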